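(* For a parameter $p\in[1,2]$ with $p\neq 1.5$, Width-2-Johnson's algorithm with parameter $p$ does not achieve an approximation ratio of $3/4$ for weighted max-sat.
   Context: Weighted max-sat: clauses (sets of literals) with nonnegative weights; maximize the total weight of satisfied clauses. Width-2-Johnson's algorithm with parameter $p$ processes the variables $x_1,\dots,x_n$ in the given online order while maintaining two (partial) assignments $A_1,A_2$, initially empty. For a clause $C$ and a partial assignment, the measure $\mu(C)$ is the weight of $C$ times $2^{-l}$, where $l$ is the number of variables of $C$ not yet assigned; for a set of clauses the measure is the sum. When processing $x_i$, for each $D=(d_1,d_2)\in\{0,1\}^2$ let $C_1$ be the set of clauses that become satisfied by assigning $x_i$ to $d_1$ in $A_1$ and $C_2$ the set of clauses that become satisfied by assigning $x_i$ to $d_2$ in $A_2$, and set $f(D)=\mu(C_1\setminus C_2)+\mu(C_2\setminus C_1)+p\,\mu(C_1\cap C_2)$; then $x_i$ is assigned $d_1$ in $A_1$ and $d_2$ in $A_2$ for $D=\arg\max_D f(D)$. At the end the algorithm returns whichever of $A_1,A_2$ satisfies the larger total weight. The approximation ratio is $\inf_I v(\mathbb{A},I)/v(I)$. *)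

From mathcomp Require Import all_boot all_order all_algebra.
Set Implicit Arguments. Unset Strict Implicit. Unset Printing Implicit Defensive.
Import Order.TTheory GRing.Theory Num.Theory.
Local Open Scope ring_scope.

Section MaxSat.
Variable R : realFieldType.
Variable n : nat.

(* A literal is a pair (variable, sign); (v, b) is satisfied by an assignment
   a iff a v = b.  A clause is a finite set of literals. *)
Definition literal := ('I_n * bool)%type.
Definition clause := {set literal}.
Definition instance := seq (clause * R).

Definition weights_nonneg (I : instance) : Prop := forall c, c \in I -> 0 <= c.2.

Definition sat (a : 'I_n -> bool) (C : clause) : bool :=
  [exists l in C, a l.1 == l.2].

Definition value (I : instance) (a : 'I_n -> bool) : R :=
  \sum_(c <- I | sat a c.1) c.2.

Definition opt (I : instance) : R :=
  \big[Num.max/0]_(a : {ffun 'I_n -> bool}) value I a.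

(* Partial assignment at stage i: the variables with index < i are assigned
   (with the values of a); the others are unassigned. *)
Definition psat (i : nat) (a : 'I_n -> bool) (C : clause) : bool :=
  [exists l in C, (l.1 < i)%N && (a l.1 == l.2)].

Definition nunassigned (i : nat) (C : clause) : nat :=
  #|[set l.1 | l in C & (i <= l.1)%N]|.

Definition mu (i : nat) (c : clause * R) : R := c.2 * (2^-1) ^+ nunassigned i c.1.

Definition becomes_sat (i : 'I_n) (a : 'I_n -> bool) (d : bool) (C : clause) : bool :=
  ~~ psat i a C && ((i, d) \in C).

Definition fval (p : R) (I : instance) (i : 'I_n) (a1 a2 : 'I_n -> bool)
    (d1 d2 : bool) : R :=
  \sum_(c <- I)
    (if becomes_sat i a1 d1 c.1 && becomes_sat i a2 d2 c.1 then p * mu i c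
     else if becomes_sat i a1 d1 c.1 || becomes_sat i a2 d2 c.1 then mu i c
     else 0).

(* (a1, a2) is a possible final state of Width-2-Johnson's algorithm with
   parameter p processing x_0, ..., x_(n-1) in order: at every step i the
   chosen pair (a1 i, a2 i) is an argmax of f (any tie-breaking). *)
Definition johnson2_run (p : R) (I : instance) (a1 a2 : 'I_n -> bool) : Prop :=
  forall (i : 'I_n) (d1 d2 : bool),
    fval p I i a1 a2 d1 d2 <= fval p I i a1 a2 (a1 i) (a2 i).

Definition johnson2_value (I : instance) (a1 a2 : 'I_n -> bool) : R :=
  Num.max (value I a1) (value I a2).

End MaxSat.

(* For 1 <= p < 3/2 take the clauses ~x0, x0, ~x1, x1, x0 \/ ~x1 with weights
   1, p-1, p-1, 1, w = (3-2p)/4.  On x0 the two copies must disagree: splitting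
   is worth p/2 + w/4, agreeing on ~x0 only p/2, and agreeing on x0 less.  On x1
   each copy then strictly prefers to repeat its value on x0, so both final
   assignments are constant and satisfy (2p+3)/4, whereas ~x0, x1 satisfies 2;
   and (2p+3)/4 < 3/4 * 2 iff p < 3/2.

   For p > 3/2 take ~x1, ~x0 \/ ~x1, x0 \/ x1 with weights p-1, (2p-1)/2, p-1.
   On x0 both copies must choose ~x0: counting ~x0 \/ ~x1 with factor p beats
   agreeing on x0 by p/8 and splitting by (2p-3)(p-1)/8.  Every completion of
   ~x0 then satisfies 2p - 3/2, whereas x0, ~x1 satisfies 3p - 5/2; and
   2p - 3/2 < 3/4 (3p - 5/2) iff p > 3/2. *)

From mathcomp Require Import all_boot all_order all_algebra lra.
Import Order.TTheory GRing.Theory Num.Theory.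
Local Open Scope ring_scope.
Set Implicit Arguments. Unset Strict Implicit.

Section Clauses.
Variable n : nat.
Implicit Types (i : nat) (a : 'I_n -> bool) (l : literal n) (A B C : clause n).

Definition unassigned i C : {set 'I_n} := [set l.1 | l in C & (i <= l.1)%N].

Lemma unassignedU i A B : unassigned i (A :|: B) = unassigned i A :|: unassigned i B.
Proof.
apply/setP => v; rewrite inE; apply/imsetP/orP => [[l]|].
  by rewrite inE in_setU => /andP[/orP[lA|lB] le_il] ->; [left|right];
    apply/imsetP; exists l; rewrite // inE ?lA ?lB.
by case=> /imsetP[l]; rewrite inE => /andP[lC le_il] ->; exists l;
  rewrite // inE in_setU lC ?orbT.
Qed.

Lemma unassigned_set1 i l :
  unassigned i [set l] = if (i <= l.1)%N then [set l.1] else set0.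
Proof.
apply/setP => v; case: ifP => le_il; rewrite ?inE.
- apply/imsetP/eqP => [[l']|->]; last by exists l; rewrite // !inE eqxx le_il.
  by rewrite !inE => /andP[/eqP-> _] ->.
- by apply/imsetP => -[l']; rewrite !inE => /andP[/eqP->]; rewrite le_il.
Qed.

Lemma nunassigned_set1 i l : nunassigned i [set l] = (i <= l.1)%N.
Proof.
rewrite /nunassigned -/(unassigned i _) unassigned_set1.
by case: ifP; rewrite ?cards1 ?cards0.
Qed.

Lemma nunassigned_set2 i l l' : l.1 != l'.1 ->
  nunassigned i [set l; l'] = ((i <= l.1) + (i <= l'.1))%N.
Proof.
move=> neq_var; rewrite /nunassigned -/(unassigned i _) unassignedU !unassigned_set1.
by case: ifP; case: ifP; rewrite ?set0U ?setU0 ?cards0 ?cards1 // cards2 neq_var.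
Qed.

Lemma psatU i a A B : psat i a (A :|: B) = psat i a A || psat i a B.
Proof.
apply/existsP/orP => [[l /andP[]]|[]/existsP[l /andP[lC al]]].
- rewrite in_setU => /orP[lA|lB] al; [left|right];
  by apply/existsP; exists l; rewrite ?lA ?lB.
- by exists l; rewrite in_setU lC.
- by exists l; rewrite in_setU lC orbT.
Qed.

Lemma psat_set1 i a l : psat i a [set l] = (l.1 < i)%N && (a l.1 == l.2).
Proof.
apply/existsP/idP => [[l' /andP[/set1P-> //]]|al].
by exists l; rewrite in_set1 eqxx.
Qed.

Lemma sat_psat a C : sat a C = psat n a C.
Proof. by apply: eq_existsb => l; rewrite ltn_ord. Qed.

End Clauses.

Lemma value_le_opt (R : realFieldType) n (I : instance R n) (a : 'I_n -> bool) :
  value I a <= opt I.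
Proof.
have -> : value I a = value I (finfun a).
  by apply: eq_bigl => c; apply: eq_existsb => l; rewrite ffunE.
exact: le_bigmax.
Qed.

Definition x0 : 'I_2 := ord0.
Definition x1 : 'I_2 := ord_max.

Ltac eval_instance :=
  rewrite ?/fval ?/value !big_cons !big_nil ?/mu ?sat_psat ?/becomes_sat /=
          !psatU !psat_set1 ?nunassigned_set2 // ?nunassigned_set1 ?in_setU ?in_set1 /=.

Section Instances.
Variables (R : realFieldType) (p : R).

Definition low_instance : instance R 2 :=
  [:: ([set (x0, false)], 1); ([set (x0, true)], p - 1);
      ([set (x1, false)], p - 1); ([set (x1, true)], 1);
      ([set (x0, true); (x1, false)], (3 - 2 * p) / 4)].

Definition high_instance : instance R 2 :=
  [:: ([set (x1, false)], p - 1); ([set (x0, false); (x1, false)], (2 * p - 1) / 2);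
      ([set (x0, true); (x1, true)], p - 1)].

Lemma johnson2_low_x0 a1 a2 : 1 <= p < 3 / 2 ->
  johnson2_run p low_instance a1 a2 -> a1 x0 != a2 x0.
Proof.
move=> /andP[p_ge1 p_lt] /(_ x0 true false); apply: contraTneq => <-; rewrite -ltNge.
by eval_instance; case: (a1 x0) => /=; nra.
Qed.

Lemma johnson2_low_x1 a1 a2 : 1 <= p < 3 / 2 ->
  johnson2_run p low_instance a1 a2 -> a1 x1 = a1 x0 /\ a2 x1 = a2 x0.
Proof.
move=> p_range run; have := johnson2_low_x0 p_range run; case/andP: p_range => p_ge1 p_lt.
move: run => /(_ x1 (a1 x0) (a2 x0)); eval_instance.
case: (a1 x0); case: (a2 x0); case: (a1 x1); case: (a2 x1) => //= le_f _; exfalso; nra.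
Qed.

Lemma value_low_const a : a x1 = a x0 -> value low_instance a = (2 * p + 3) / 4.
Proof. by eval_instance => ->; case: (a x0) => /=; lra. Qed.

Lemma opt_low : 2 <= opt low_instance.
Proof.
apply: le_trans (value_le_opt _ (fun v => v == x1)).
by eval_instance; lra.
Qed.

Lemma low_weights_nonneg : 1 <= p <= 3 / 2 -> weights_nonneg low_instance.
Proof.
by case/andP=> p_ge1 p_le; apply/allP; rewrite /= andbT; apply/and5P; split; lra.
Qed.

Lemma johnson2_high_x0 a1 a2 : 3 / 2 < p ->
  johnson2_run p high_instance a1 a2 -> a1 x0 = false /\ a2 x0 = false.
Proof.
move=> p_gt /(_ x0 false false); eval_instance.
by case: (a1 x0); case: (a2 x0) => //= le_f; exfalso; nra.
Qed.

Lemma value_high a : a x0 = false -> value high_instance a = 2 * p - 3 / 2.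
Proof. by eval_instance => ->; case: (a x1) => /=; lra. Qed.

Lemma opt_high : 3 * p - 5 / 2 <= opt high_instance.
Proof.
apply: le_trans (value_le_opt _ (fun v => v == x0)).
by eval_instance; lra.
Qed.

Lemma high_weights_nonneg : 1 <= p -> weights_nonneg high_instance.
Proof. by move=> p_ge1; apply/allP; rewrite /= andbT; apply/and3P; split; lra. Qed.

End Instances.

Theorem lemma3 (R : realFieldType) (p : R) :
  1 <= p <= 2 -> p != 3 / 2 ->
  exists (n : nat) (I : instance R n),
    weights_nonneg I /\
    forall a1 a2 : 'I_n -> bool,
      johnson2_run p I a1 a2 -> johnson2_value I a1 a2 < 3 / 4 * opt I.
Proof.
move=> /andP[p_ge1 _]; rewrite neq_lt => /orP[p_lt|p_gt].
- have p_low : 1 <= p < 3 / 2 by rewrite p_ge1.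
  exists 2%N, (low_instance p); split; first by apply: low_weights_nonneg; lra.
  move=> a1 a2 run; have [a1_const a2_const] := johnson2_low_x1 p_low run.
  rewrite /johnson2_value !value_low_const // maxxx.
  by apply: lt_le_trans (ler_wpM2l _ (opt_low p)); lra.
- exists 2%N, (high_instance p); split; first exact: high_weights_nonneg.
  move=> a1 a2 run; have [a1_x0 a2_x0] := johnson2_high_x0 p_gt run.
  rewrite /johnson2_value !value_high // maxxx.
  by apply: lt_le_trans (ler_wpM2l _ (opt_high p)); lra.
Qed.
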